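(* Let $a\ge 4$ and $b\ge 5$ be integers, let $n=a+b-2$, and consider the 2-connected $(a,b)$-puzzle on $V=\{1,\dots,n\}$, i.e. the cycle set consisting of the two cycles $\alpha=(1\ 2\ \dots\ a)$ and $\beta=(a-1\ a\ a+1\ \dots\ n)$. Then any even permutation of $V$ can be generated in $O(n^2)$ shifts; that is, there is an absolute constant $K$ (independent of $a,b$) such that every even permutation of $V$ is a product of at most $Kn^2$ factors, each of which is one of $\alpha,\alpha^{-1},\beta,\beta^{-1}$.
   Context: Permutations are written in cycle notation. A shift along a cycle $(v_1\ \dots\ v_j)$ corresponds to applying the permutation $(v_1\ \dots\ v_j)$ or its inverse to the tokens placed on the vertices of $V$. *)

From mathcomp Require Import all_boot all_fingroup zify.
Set Implicit Arguments. Unset Strict Implicit. Unset Printing Implicit Defensive.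

(* Vertices 1..n of the paper are represented 0-indexed by 'I_n (vertex v is v-1). *)

Definition cyc_nat (lo hi i : nat) : nat :=
  if (lo <= i) && (i.+1 < hi) then i.+1
  else if (i.+1 == hi) && (lo < hi) then lo else i.

Lemma cyc_nat_inj lo hi : injective (cyc_nat lo hi).
Proof.
move=> i j; rewrite /cyc_nat.
case: ifP => /andP; case: ifP => /andP; try case: ifP => /andP;
  try case: ifP => /andP; move=> *; lia.
Qed.

Lemma cyc_nat_lt lo hi n i : hi <= n -> i < n -> cyc_nat lo hi i < n.
Proof. rewrite /cyc_nat; case: ifP => /andP; try case: ifP => /andP; lia. Qed.

Definition cyc_fun (n lo hi : nat) (i : 'I_n) : 'I_n :=
  if hi <= n then insubd i (cyc_nat lo hi i) else i.

Lemma cyc_fun_inj n lo hi : injective (@cyc_fun n lo hi).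
Proof.
move=> i j; rewrite /cyc_fun; case: ifP => hn //.
move/(congr1 val); rewrite !val_insubd !(cyc_nat_lt lo hn (ltn_ord _)) => H.
by apply: val_inj; apply: (@cyc_nat_inj lo hi).
Qed.

Definition cycle_perm (n lo hi : nat) : {perm 'I_n} := perm (@cyc_fun_inj n lo hi).

(* The (a,b)-puzzle on n = a+b-2 vertices:
   alpha = (1 2 ... a), beta = (a-1 a ... n)   (1-indexed, as in the paper). *)
Definition alpha (a b : nat) : {perm 'I_(a + b - 2)} := cycle_perm (a + b - 2) 0 a.
Definition beta (a b : nat) : {perm 'I_(a + b - 2)} := cycle_perm (a + b - 2) (a - 2) (a + b - 2).

(* The commutator [~ beta, alpha^-1] is the double transposition (a-1 a)(a-3 a-2)
   (vertices 0-indexed), and conjugating it by (beta^2)^alpha turns it into (a a+2)(a-3 a-2);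
   multiplying the first by the inverse of the second cancels (a-3 a-2) and leaves the
   3-cycle (a+2 a a-1), a word of constant length. Conjugating by powers of alpha and beta,
   which fix some points of a 3-cycle and shift another one, produces every 3-cycle
   (0 1 u) as a word of length O(n). Finally, an even permutation is brought to the
   identity one point at a time, each step multiplying by a product of two such 3-cycles
   that fixes one more point outside {0, 1}; n steps give O(n^2) shifts. *)

From mathcomp Require Import all_boot all_fingroup zify.
Set Implicit Arguments. Unset Strict Implicit. Unset Printing Implicit Defensive.

Local Open Scope group_scope.

Section Words.
Variables (gT : finGroupType) (gs : seq gT).

Definition generated_in (L : nat) (g : gT) :=
  exists w : seq gT, all (mem gs) w /\ size w <= L /\ g = \prod_(h <- w) h.

Lemma generated_in_mono L L' g : L <= L' -> generated_in L g -> generated_in L' g.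
Proof. by move=> le_L [w [gs_w [le_w ->]]]; exists w; rewrite (leq_trans le_w le_L). Qed.

Lemma generated_in1 L : generated_in L 1.
Proof. by exists [::]; rewrite big_nil. Qed.

Lemma generated_in_mem g : g \in gs -> generated_in 1 g.
Proof. by move=> gs_g; exists [:: g]; rewrite /= gs_g big_seq1. Qed.

Lemma generated_inM L1 L2 g h :
  generated_in L1 g -> generated_in L2 h -> generated_in (L1 + L2) (g * h).
Proof.
move=> [w1 [gs_w1 [le_w1 ->]]] [w2 [gs_w2 [le_w2 ->]]].
by exists (w1 ++ w2); rewrite all_cat gs_w1 gs_w2 size_cat big_cat leq_add.
Qed.

Lemma generated_inX g k : g \in gs -> generated_in k (g ^+ k).
Proof.
move=> gs_g; elim: k => [|k IHk]; first exact: generated_in1.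
by rewrite expgS; apply: generated_inM (generated_in_mem gs_g) IHk.
Qed.

Hypothesis gsV : {in gs, forall g, g^-1 \in gs}.

Lemma generated_inV L g : generated_in L g -> generated_in L g^-1.
Proof.
move=> [w [gs_w [le_w ->]]]; exists (map (fun h => h^-1) (rev w)).
rewrite all_map size_map size_rev big_map prodgV revK; split=> //.
by apply/allP=> h; rewrite mem_rev => /(allP gs_w)/gsV.
Qed.

Lemma generated_inJ L1 L2 g h :
  generated_in L1 g -> generated_in L2 h -> generated_in (L1 + 2 * L2) (g ^ h).
Proof.
move=> gen_g gen_h; rewrite conjgE mulgA.
apply: generated_in_mono (generated_inM (generated_inM (generated_inV gen_h) gen_g) gen_h).
lia.
Qed.

Lemma generated_inR L1 L2 g h :
  generated_in L1 g -> generated_in L2 h -> generated_in (2 * (L1 + L2)) [~ g, h].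
Proof.
move=> gen_g gen_h; rewrite commgEl.
apply: generated_in_mono (generated_inM (generated_inV gen_g) (generated_inJ gen_g gen_h)).
lia.
Qed.

End Words.

Section ThreeCycles.
Variable T : finType.
Implicit Types (x y z r s v w : T) (g : {perm T}).

(* Permutations compose left to right, [(g * h) w = h (g w)], so this is x -> y -> z -> x. *)
Definition cycle3 x y z : {perm T} := tperm x y * tperm x z.

Lemma cycle3_1 x y z : x != y -> y != z -> cycle3 x y z x = y.
Proof. by move=> xy yz; rewrite permM tpermL tpermD // eq_sym. Qed.

Lemma cycle3_2 x y z : cycle3 x y z y = z.
Proof. by rewrite permM tpermR tpermL. Qed.

Lemma cycle3_3 x y z : x != z -> y != z -> cycle3 x y z z = x.
Proof. by move=> xz yz; rewrite permM [tperm x y z]tpermD ?tpermR. Qed.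

Lemma cycle3J x y z g : cycle3 x y z ^ g = cycle3 (g x) (g y) (g z).
Proof. by rewrite conjMg !tpermJ. Qed.

Lemma odd_cycle3 x y z : x != y -> x != z -> odd_perm (cycle3 x y z) = false.
Proof. by move=> xy xz; rewrite odd_permM !odd_tperm xy xz. Qed.

Lemma cycle3_on x y z : perm_on [set x; y; z] (cycle3 x y z).
Proof.
apply: perm_onM; apply: subset_trans (tperm_on _ _) _;
  by apply/subsetP=> w; rewrite !inE => /orP[]->; rewrite ?orbT.
Qed.

Lemma tperm_cycle3 r s v : r != s -> r != v -> tperm r s * tperm s v = cycle3 v s r.
Proof.
move=> rs rv; rewrite /cycle3 -(@tpermJ_tperm _ s v r) 1?eq_sym //.
by rewrite conjgE tpermV (tpermC v s) !mulgA tperm2 mul1g tpermC.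
Qed.

Lemma cycle3_out x y z w : w \notin [set x; y; z] -> cycle3 x y z w = w.
Proof. exact: out_perm (cycle3_on x y z). Qed.

Lemma cycle3_pivot x y p q r : uniq [:: x; y; p; q; r] ->
  cycle3 p q r = (cycle3 x y r ^ cycle3 x y q) ^ cycle3 x y p.
Proof.
rewrite /= !inE !negb_or -!andbA andbT.
case/and5P=> xy _ xq xr /and5P[yp yq yr pq /andP[pr qr]].
have q_out : q \notin [set x; y; p] by rewrite !inE !negb_or ![q == _]eq_sym xq yq pq.
have r_out : r \notin [set x; y; p] by rewrite !inE !negb_or ![r == _]eq_sym xr yr pr.
have r_out' : r \notin [set x; y; q] by rewrite !inE !negb_or ![r == _]eq_sym xr yr qr.
by rewrite !cycle3J cycle3_1 // !cycle3_2 !cycle3_out.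
Qed.

End ThreeCycles.

Lemma perm_on2_fix_eq1 (T : finType) (P Q : T) (s : {perm T}) :
  perm_on [set P; Q] s -> s P = P -> s = 1.
Proof.
move=> onPQ sP; apply: (@perm_on_id _ _ [set Q]); last by rewrite cards1.
apply/subsetP=> x sx; have := subsetP onPQ x sx.
by rewrite !inE => /orP[/eqP xP|//]; rewrite inE xP sP eqxx in sx.
Qed.

Lemma even_perm_on2_eq1 (T : finType) (P Q : T) (s : {perm T}) :
  perm_on [set P; Q] s -> ~~ odd_perm s -> s = 1.
Proof.
move=> onPQ even_s; have [sP|sP] := eqVneq (s P) P.
  exact: perm_on2_fix_eq1 onPQ sP.
have sPQ : s P = Q.
  by move: (perm_closed P onPQ); rewrite !inE eqxx (negbTE sP) => /eqP.
have : s * tperm P Q = 1.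
  apply: perm_on2_fix_eq1 (perm_onM onPQ (tperm_on P Q)) _.
  by rewrite permM sPQ tpermR.
move/eqP; rewrite mulg_eq1 tpermV => /eqP s_tperm.
by move: even_s; rewrite s_tperm odd_tperm -sPQ eq_sym sP.
Qed.

Section EvenPerms.
Variables (T : finType) (gs : seq {perm T}).
Hypothesis gsV : {in gs, forall g, g^-1 \in gs}.
Variables (P Q : T) (L : nat).
Hypothesis PQ : P != Q.
Hypothesis gen_cycle3 : forall u, u != P -> u != Q -> generated_in gs L (cycle3 P Q u).

Lemma exists_even_mover x y : x != P -> x != Q -> y != x ->
  exists2 c, generated_in gs (2 * L) c &
    [/\ ~~ odd_perm c, c y = x & perm_on [set P; Q; x; y] c].
Proof.
move=> xP xQ yx; have Px : P != x by rewrite eq_sym.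
have Qx : Q != x by rewrite eq_sym.
have le_L : L <= 2 * L by rewrite leq_pmull.
have gen_xV := generated_inV gsV (gen_cycle3 xP xQ).
have even_x : ~~ odd_perm (cycle3 P Q x) by rewrite odd_cycle3.
have on_sub z : z \in [set x; y] -> perm_on [set P; Q; x; y] (cycle3 P Q z).
  move=> z_xy; apply: subset_trans (cycle3_on P Q z) _.
  rewrite !subUset !sub1set !inE !eqxx ?orbT /=; rewrite !inE in z_xy.
  by case/orP: z_xy => ->; rewrite ?orbT.
have on_x := on_sub x (set21 x y).
have cV_P : (cycle3 P Q x)^-1 P = x by apply: (canLR (permK _)); rewrite cycle3_3.
have [yP|yP] := eqVneq y P.
  exists (cycle3 P Q x)^-1; first exact: generated_in_mono gen_xV.
  by split; [rewrite odd_permV | rewrite yP | apply: perm_onV].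
have [yQ|yQ] := eqVneq y Q.
  exists (cycle3 P Q x); last by split=> //; rewrite yQ cycle3_2.
  exact: generated_in_mono (gen_cycle3 xP xQ).
exists (cycle3 P Q y * (cycle3 P Q x)^-1).
  by apply: generated_in_mono (generated_inM (gen_cycle3 yP yQ) gen_xV); lia.
have Py : P != y by rewrite eq_sym.
have Qy : Q != y by rewrite eq_sym.
rewrite odd_permM odd_permV !odd_cycle3 // permM cycle3_3 //.
by split=> //; apply/perm_onM/perm_onV/on_x/on_sub/set22.
Qed.

Lemma generated_in_even_moved k s : ~~ odd_perm s ->
  #|[set z | s z != z] :\: [set P; Q]| <= k -> generated_in gs (2 * L * k) s.
Proof.
have fix_PQ (t : {perm T}) :
    [set z | t z != z] :\: [set P; Q] = set0 -> ~~ odd_perm t -> t = 1.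
  move=> moved0; apply: (@even_perm_on2_eq1 _ P Q); apply/subsetP=> z; rewrite inE => tz.
  by apply: contraT => zPQ; have := in_set0 z; rewrite -moved0 in_setD zPQ inE tz.
elim: k s => [|k IHk] s even_s.
  by rewrite leqn0 cards_eq0 => /eqP/fix_PQ-> //; apply: generated_in1.
move=> le_moved; have [/fix_PQ-> //|[x]] := set_0Vmem ([set z | s z != z] :\: [set P; Q]).
  exact: generated_in1.
move=> moved_x; move: (moved_x); rewrite !inE negb_or => /andP[/andP[xP xQ] sx].
have [c gen_c [even_c cx on_c]] := exists_even_mover xP xQ sx.
rewrite -(mulgK c s) mulnSr; apply: generated_inM (generated_inV gsV gen_c).
apply: IHk; first by rewrite odd_permM (negbTE even_s) (negbTE even_c).
have sub_moved : [set z | (s * c) z != z] :\: [set P; Q] \subset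
    ([set z | s z != z] :\: [set P; Q]) :\ x.
  apply/subsetP=> z; rewrite !inE permM => /andP[zPQ csz].
  have zx : z != x by apply: contraNneq csz => ->; rewrite cx.
  rewrite zx zPQ /=; apply/eqP => szz; rewrite szz in csz.
  have z_sx : z = s x.
    have := subsetP on_c z; rewrite !inE (negbTE zPQ) (negbTE zx) /=.
    by move=> /(_ csz) /eqP.
  by move/eqP: zx; apply; apply: (@perm_inj _ s); rewrite szz.
apply: leq_trans (subset_leq_card sub_moved) _.
by move: le_moved; rewrite (cardsD1 x) moved_x add1n ltnS.
Qed.

Lemma generated_in_even s : ~~ odd_perm s -> generated_in gs (2 * L * #|T|) s.
Proof. by move=> even_s; apply: generated_in_even_moved (max_card _). Qed.

End EvenPerms.

Lemma cyc_natS lo hi i : lo <= i -> i.+1 < hi -> cyc_nat lo hi i = i.+1.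
Proof. by move=> lo_i i_hi; rewrite /cyc_nat lo_i i_hi. Qed.

Lemma cyc_nat_last lo hi : lo < hi -> cyc_nat lo hi hi.-1 = lo.
Proof. by move=> lo_hi; rewrite /cyc_nat; case: ifP => ?; last case: ifP => ?; lia. Qed.

Lemma cyc_nat_out lo hi i : ~~ (lo <= i < hi) -> cyc_nat lo hi i = i.
Proof. by move=> i_out; rewrite /cyc_nat; case: ifP => ?; last case: ifP => ?; lia. Qed.

Section CyclePerm.
Variables n lo hi : nat.
Implicit Type x : 'I_n.

Lemma cycle_permE x : hi <= n -> cycle_perm n lo hi x = cyc_nat lo hi x :> nat.
Proof. by move=> hi_n; rewrite permE /cyc_fun hi_n val_insubd cyc_nat_lt. Qed.

Lemma cycle_perm_out x : ~~ (lo <= x < hi) -> cycle_perm n lo hi x = x.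
Proof.
move=> x_out; rewrite permE /cyc_fun; case: ifP => // hi_n.
by apply: ord_inj; rewrite val_insubd (cyc_nat_lt lo hi_n (ltn_ord x)) cyc_nat_out.
Qed.

Lemma cycle_permX x j : hi <= n -> lo <= x -> x + j < hi ->
  (cycle_perm n lo hi ^+ j) x = x + j :> nat.
Proof.
move=> hi_n lo_x; elim: j => [|j IHj] lt_hi; first by rewrite expg0 perm1 addn0.
by rewrite expgSr permM cycle_permE // IHj ?cyc_natS ?addnS //; lia.
Qed.

End CyclePerm.

Section Puzzle.
Variables a b : nat.
Hypotheses (a_ge4 : 4 <= a) (b_ge5 : 5 <= b).
Local Notation n := (a + b - 2).
Local Notation al := (alpha a b).
Local Notation be := (beta a b).

Lemma puzzle_gt0 : 0 < n. Proof. lia. Qed.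

(* Vertex [k] (0-indexed) for [k < n]; larger [k] wrap around modulo [n]. *)
Definition pt k : 'I_n := Ordinal (ltn_pmod k puzzle_gt0).

Lemma val_pt k : k < n -> pt k = k :> nat.
Proof. exact: modn_small. Qed.

Lemma pt_neq i j : i < n -> j < n -> i != j -> pt i != pt j.
Proof.
by move=> i_n j_n; apply: contra => /eqP/(congr1 (@nat_of_ord _)); rewrite !val_pt // => ->.
Qed.

Lemma pt_val (x : 'I_n) : pt x = x.
Proof. by apply: ord_inj; rewrite val_pt. Qed.

Lemma alphaX_pt k j : k + j < a -> (al ^+ j) (pt k) = pt (k + j).
Proof. by move=> lt_a; apply: ord_inj; rewrite /alpha cycle_permX ?val_pt //; lia. Qed.

Lemma alpha_pt_out k : a <= k < n -> al (pt k) = pt k.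
Proof. by move=> k_out; rewrite /alpha cycle_perm_out // val_pt; lia. Qed.

Lemma alpha_pt_last : al (pt (a - 1)) = pt 0.
Proof.
by apply: ord_inj; rewrite /alpha cycle_permE ?val_pt ?subn1 ?cyc_nat_last //; lia.
Qed.

Lemma betaX_pt k j : a - 2 <= k -> k + j < n -> (be ^+ j) (pt k) = pt (k + j).
Proof. by move=> le_k lt_n; apply: ord_inj; rewrite /beta cycle_permX ?val_pt //; lia. Qed.

Lemma alpha_ptS k : k.+1 < a -> al (pt k) = pt k.+1.
Proof. by move=> lt_a; rewrite -[al]expg1 alphaX_pt ?addn1. Qed.

Lemma beta_pt_out k : k < a - 2 -> be (pt k) = pt k.
Proof. by move=> k_out; rewrite /beta cycle_perm_out // val_pt; lia. Qed.

Lemma tperm_ptE i j (x : 'I_n) : i < n -> j < n ->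
  tperm (pt i) (pt j) x = (if x == i :> nat then j else if x == j :> nat then i else x) :> nat.
Proof.
move=> i_n j_n; have pt_x k : k < n -> x = k :> nat -> x = pt k.
  by move=> k_n x_k; apply: ord_inj; rewrite val_pt.
case: eqP => [/(pt_x _ i_n)->|x_i]; first by rewrite tpermL !val_pt.
case: eqP => [/(pt_x _ j_n)->|x_j]; first by rewrite tpermR !val_pt.
by rewrite tpermD // eq_sym; apply/eqP=> /(congr1 (@nat_of_ord _)); rewrite val_pt.
Qed.

Definition shifts := [:: al; al^-1; be; be^-1].

Lemma shiftsV : {in shifts, forall g, g^-1 \in shifts}.
Proof. by move=> g; rewrite !inE => /or4P[]/eqP->; rewrite ?invgK eqxx ?orbT. Qed.

Lemma commg_beta_alphaV :
  [~ be, al^-1] = tperm (pt (a - 1)) (pt a) * tperm (pt (a - 3)) (pt (a - 2)).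
Proof.
set D := _ * _; suff al_be : al * be = be * D * al.
  by rewrite /commg conjgE invgK [al * _]mulgA al_be mulgK mulKg.
apply/permP => x; apply: ord_inj; have a_n : a <= n by lia.
rewrite !permM /alpha /beta !cycle_permE // !tperm_ptE ?cycle_permE //; try lia.
rewrite /cyc_nat; have := ltn_ord x; move: (nat_of_ord x) => y y_n.
by repeat case: ifP; move=> *; lia.
Qed.

Lemma commg_beta_alphaV_conj :
  [~ be, al^-1] ^ ((be ^+ 2) ^ al) =
    tperm (pt a) (pt (a + 2)) * tperm (pt (a - 3)) (pt (a - 2)).
Proof.
set g := (be ^+ 2) ^ al.
have g_alpha k : g (al (pt k)) = al ((be ^+ 2) (pt k)) by apply: permJ.
have g_low k : k < a - 2 -> g (pt k.+1) = pt k.+1.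
  by move=> lt_k; rewrite -alpha_ptS ?g_alpha ?permX_fix ?beta_pt_out //; lia.
rewrite commg_beta_alphaV conjMg !tpermJ; congr (tperm _ _ * tperm _ _).
- rewrite (_ : a - 1 = (a - 2).+1) -?alpha_ptS ?g_alpha ?betaX_pt ?alpha_pt_out ?subnK //; lia.
- by rewrite -{1}[pt a]alpha_pt_out ?g_alpha ?betaX_pt ?alpha_pt_out //; lia.
- by rewrite (_ : a - 3 = (a - 4).+1) ?g_low //; lia.
- by rewrite (_ : a - 2 = (a - 3).+1) ?g_low //; lia.
Qed.

Lemma cycle3_commg : cycle3 (pt (a + 2)) (pt a) (pt (a - 1)) =
  [~ be, al^-1] * ([~ be, al^-1] ^ ((be ^+ 2) ^ al))^-1.
Proof.
rewrite commg_beta_alphaV_conj commg_beta_alphaV invMg !tpermV mulgA.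
by rewrite -(mulgA (tperm _ _)) tperm2 mulg1 tperm_cycle3 // pt_neq //; lia.
Qed.

Lemma alpha_shift : al \in shifts. Proof. by rewrite inE eqxx. Qed.
Lemma beta_shift : be \in shifts. Proof. by rewrite !inE eqxx ?orbT. Qed.

Lemma generated_in_cycle3_commg :
  generated_in shifts 16 (cycle3 (pt (a + 2)) (pt a) (pt (a - 1))).
Proof.
have gen_D := generated_inR shiftsV (generated_in_mem beta_shift)
  (generated_inV shiftsV (generated_in_mem alpha_shift)).
have gen_g := generated_inJ shiftsV (generated_inX 2 beta_shift) (generated_in_mem alpha_shift).
by rewrite cycle3_commg; apply: generated_in_mono
  (generated_inM gen_D (generated_inV shiftsV (generated_inJ shiftsV gen_D gen_g))).
Qed.

Lemma generated_in_cycle3_alpha w : w < a ->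
  generated_in shifts (16 + 2 * a) (cycle3 (pt (a + 2)) (pt a) (pt w)).
Proof.
move=> w_a; have al_fix k : a <= k < n -> (al ^+ w.+1) (pt k) = pt k.
  by move=> k_out; rewrite permX_fix // alpha_pt_out.
have -> : cycle3 (pt (a + 2)) (pt a) (pt w) =
    cycle3 (pt (a + 2)) (pt a) (pt (a - 1)) ^ (al ^+ w.+1).
  by rewrite cycle3J (al_fix (a + 2)) ?(al_fix a) ?expgS ?permM ?alpha_pt_last
    ?alphaX_pt //; lia.
have gen_alpha := generated_inX w.+1 alpha_shift.
by apply: generated_in_mono (generated_inJ shiftsV generated_in_cycle3_commg gen_alpha); lia.
Qed.

Lemma generated_in_cycle3_low p q r : p < a -> q < a -> r < a -> uniq [:: p; q; r] ->
  generated_in shifts (5 * (16 + 2 * a)) (cycle3 (pt p) (pt q) (pt r)).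
Proof.
move=> p_a q_a r_a pqr; rewrite (@cycle3_pivot _ (pt (a + 2)) (pt a)).
  have gen_qr := generated_inJ shiftsV (generated_in_cycle3_alpha r_a)
    (generated_in_cycle3_alpha q_a).
  by apply: generated_in_mono (generated_inJ shiftsV gen_qr (generated_in_cycle3_alpha p_a)); lia.
move: pqr; rewrite /= !inE !negb_or !andbT => /andP[/andP[pq pr] qr].
by rewrite !pt_neq //; lia.
Qed.

Lemma generated_in_cycle3_01 u : u != pt 0 -> u != pt 1 ->
  generated_in shifts (5 * (16 + 2 * a) + 2 * b) (cycle3 (pt 0) (pt 1) u).
Proof.
have neq_pt k : u != pt k -> k < n -> u != k :> nat.
  by move=> u_k k_n; apply: contra u_k => /eqP u_k; apply/eqP/ord_inj; rewrite val_pt.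
move=> /neq_pt/(_ puzzle_gt0) u0 /neq_pt u1; have [u_a|a_u] := ltnP u a.
  rewrite -(pt_val u); apply: generated_in_mono (generated_in_cycle3_low _ _ u_a _);
    rewrite /= ?inE; lia.
have be_fix j k : k < a - 2 -> (be ^+ j) (pt k) = pt k.
  by move=> k_lt; rewrite permX_fix // beta_pt_out.
have -> : cycle3 (pt 0) (pt 1) u = cycle3 (pt 0) (pt 1) (pt (a - 1)) ^ (be ^+ (u - (a - 1))).
  by rewrite cycle3J (be_fix _ 0) ?(be_fix _ 1%N) ?betaX_pt ?subnKC ?pt_val //; lia.
have gen_last : generated_in shifts (5 * (16 + 2 * a)) (cycle3 (pt 0) (pt 1) (pt (a - 1))).
  by apply: generated_in_cycle3_low; rewrite //= ?inE; lia.
apply: generated_in_mono (generated_inJ shiftsV gen_last (generated_inX _ beta_shift)).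
by have := ltn_ord u; lia.
Qed.

End Puzzle.

Theorem lemma2 :
  exists K : nat, forall (a b : nat), 4 <= a -> 5 <= b ->
    forall s : {perm 'I_(a + b - 2)}, ~~ odd_perm s ->
      exists w : seq {perm 'I_(a + b - 2)},
        all (fun g => g \in [:: alpha a b; (alpha a b)^-1; beta a b; (beta a b)^-1]%g) w
        /\ size w <= K * (a + b - 2) ^ 2
        /\ s = (\prod_(g <- w) g)%g.
Proof.
exists 100 => a b a_ge4 b_ge5 s even_s.
have pt01 : pt a_ge4 b_ge5 0 != pt a_ge4 b_ge5 1 by apply: pt_neq => //; lia.
have [w [shifts_w [size_w ->]]] :=
  generated_in_even (@shiftsV a b) pt01 (@generated_in_cycle3_01 a b a_ge4 b_ge5) even_s.
exists w; split=> //; split=> //; apply: leq_trans size_w _.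
by rewrite card_ord expnS expn1 mulnA leq_mul2r; apply/orP; right; lia.
Qed.
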